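(* Let $\varphi(x)=a_nx^n+\cdots+a_1x+a_0\in\mathbb{C}[x]$ with $a_n\neq0$ have $n$ distinct roots $x_1,\dots,x_n$. For any rational function $h(x)\in R$, $$\sum_{i=1}^n h(x_i)=\frac{b_{n-1}}{a_n},$$ where $b_{n-1}$ is the coefficient of $x^{n-1}$ in the unique polynomial $r(x)$ of degree less than $n$ lying in the coset $\overline{\varphi'(x)h(x)}\in R/(\varphi(x))$.
   Context: $R\subset\mathbb{C}(x)$ denotes the subring of rational functions $p(x)/q(x)$ with $p,q\in\mathbb{C}[x]$ and $q(x_i)\neq0$ for every root $x_i$ of $\varphi$. $(\varphi(x))$ is the ideal of $R$ generated by $\varphi$, and cosets in $R/(\varphi(x))$ are denoted by an overbar. Every coset of $R/(\varphi(x))$ contains a unique polynomial of degree less than $n$. *)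

From HB Require Import structures.
From mathcomp Require Import all_boot all_order all_algebra.
From mathcomp Require Import fraction.
From mathcomp Require Import complex.
From mathcomp Require Import reals.
Set Implicit Arguments. Unset Strict Implicit. Unset Printing Implicit Defensive.
Import Order.TTheory GRing.Theory Num.Theory.
Local Open Scope ring_scope.

Notation "x %:F" := (tofrac x).

(* The subring R of C(x) attached to phi: rational functions p/q with
   q(x_i) <> 0 for every root x_i of phi. *)
Definition inRloc (C : fieldType) (phi : {poly C}) (f : {fraction {poly C}}) : Prop :=
  exists p q : {poly C},
    (forall x, root phi x -> q.[x] != 0) /\ f = p%:F / q%:F.

Definition in_phi_ideal (C : fieldType) (phi : {poly C}) (f : {fraction {poly C}}) : Prop :=
  exists s, inRloc phi s /\ f = phi%:F * s.

(** Evaluating the congruence [phi' h = r mod phi] at the roots gives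
    [r(x_i) = phi'(x_i) h(x_i)]. Since [r] has degree less than [n] it is
    its own Lagrange interpolant at the [n] simple roots, i.e.
    [r = sum_i r(x_i) / phi'(x_i) * phi / (X - x_i)], and each cofactor
    [phi / (X - x_i)] has leading coefficient [a_n] in degree [n - 1].
    Comparing coefficients of [X^(n-1)] yields [b_(n-1) = a_n sum_i h(x_i)]. *)

From mathcomp Require Import all_boot all_order all_algebra.
From mathcomp Require Import fraction complex reals ring.

Set Implicit Arguments.
Unset Strict Implicit.
Unset Printing Implicit Defensive.

Import Order.TTheory GRing.Theory Num.Theory.
Local Open Scope ring_scope.

Section Cofactor.
Variables (C : fieldType) (phi : {poly C}).

Definition cofactor (x : C) : {poly C} := phi %/ ('X - x%:P).

Lemma cofactorK x : root phi x -> cofactor x * ('X - x%:P) = phi.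
Proof. by move=> phix; rewrite divpK // dvdp_XsubCl. Qed.

Lemma size_cofactor x : size (cofactor x) = (size phi).-1.
Proof. by rewrite size_divp ?polyXsubC_eq0 // size_XsubC subn1. Qed.

Lemma lead_coef_cofactor x : root phi x -> lead_coef (cofactor x) = lead_coef phi.
Proof. by move=> phix; rewrite -[in RHS](cofactorK phix) lead_coef_Mmonic ?monicXsubC. Qed.

Lemma root_cofactor x y : root phi x -> root phi y -> y != x -> root (cofactor x) y.
Proof.
move=> phix; rewrite -[phi in root phi y](cofactorK phix) rootM root_XsubC.
by move=> /orP[// | /eqP ->]; rewrite eqxx.
Qed.

Lemma horner_deriv_root x : root phi x -> phi^`().[x] = (cofactor x).[x].
Proof.
move=> phix; rewrite -[in LHS](cofactorK phix) derivM derivXsubC !hornerE.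
by rewrite subrr mulr0 add0r.
Qed.

End Cofactor.

Section SimpleRoots.
Variables (C : fieldType) (phi : {poly C}) (xs : seq C).
Hypotheses (size_phi : size phi = (size xs).+1) (uniq_xs : uniq xs)
  (roots_xs : all (root phi) xs).

Let phi_root x : x \in xs -> root phi x. Proof. exact: allP roots_xs x. Qed.

Lemma size_cofactor_roots x : size (cofactor phi x) = size xs.
Proof. by rewrite size_cofactor size_phi. Qed.

Lemma horner_cofactor_roots x y : x \in xs -> y \in xs ->
  (cofactor phi x).[y] = (x == y)%:R * phi^`().[x].
Proof.
move=> xs_x xs_y; have [<- | xy] := eqVneq x y.
  by rewrite mul1r horner_deriv_root ?phi_root.
by rewrite mul0r; apply/eqP/root_cofactor; rewrite ?phi_root // eq_sym.
Qed.

(* A double root would be a root of the cofactor, which has too few roots. *)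
Lemma deriv_root_neq0 x : x \in xs -> phi^`().[x] != 0.
Proof.
move=> xs_x; apply/eqP => phi'x0.
have cofactor0 : cofactor phi x = 0.
  apply: (roots_geq_poly_eq0 _ uniq_xs); last by rewrite size_cofactor_roots.
  by apply/allP => y xs_y; rewrite /root horner_cofactor_roots // phi'x0 mulr0.
have := size_cofactor_roots x; rewrite cofactor0 size_poly0 => /esym/size0nil.
by move=> xs_nil; rewrite xs_nil in xs_x.
Qed.

Lemma interpolation_cofactor (r : {poly C}) : (size r <= size xs)%N ->
  r = \sum_(x <- xs) (r.[x] / phi^`().[x]) *: cofactor phi x.
Proof.
move=> size_r; set L := \sum_(x <- xs) _; apply/eqP; rewrite -subr_eq0; apply/eqP.
apply: (roots_geq_poly_eq0 _ uniq_xs).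
- apply/allP => y xs_y; rewrite /root hornerD hornerN horner_sum.
  rewrite (bigD1_seq y) //= big_seq_cond big1 => [|x /andP[xs_x yx]].
    rewrite addr0 hornerZ horner_cofactor_roots // eqxx mul1r.
    by rewrite divfK ?subrr // deriv_root_neq0.
  by rewrite hornerZ horner_cofactor_roots // (negPf yx) mul0r mulr0.
- rewrite (leq_trans (size_polyD _ _)) // size_polyN geq_max size_r /=.
  apply: leq_trans (size_sum _ _ _) _; apply/bigmax_leqP_seq => x _ _.
  by rewrite (leq_trans (size_scale_leq _ _)) // size_cofactor_roots.
Qed.

Lemma coef_interpolation (r : {poly C}) : (size r <= size xs)%N ->
  r`_(size xs).-1 = lead_coef phi * \sum_(x <- xs) r.[x] / phi^`().[x].
Proof.
move=> size_r; rewrite {1}(interpolation_cofactor size_r) coef_sum mulr_sumr.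
rewrite big_seq [RHS]big_seq; apply: eq_bigr => x xs_x.
rewrite coefZ -(size_cofactor_roots x) -lead_coefE lead_coef_cofactor ?phi_root //.
exact: mulrC.
Qed.

End SimpleRoots.

Lemma clear_denominators (K : fieldType) (a p q r s t u : K) : q != 0 -> u != 0 ->
  a * (p / q) - r = s * (t / u) -> (a * p - r * q) * u = s * t * q.
Proof.
move=> q0 u0 E; transitivity ((a * (p / q) - r) * (q * u)); first by field.
by rewrite E; field.
Qed.

Lemma in_phi_ideal_horner (C : fieldType) (phi a p q r : {poly C}) x :
    root phi x -> q.[x] != 0 ->
    in_phi_ideal phi (a%:F * (p%:F / q%:F) - r%:F) ->
  r.[x] = a.[x] * (p.[x] / q.[x]).
Proof.
move=> phix qx0 [_ [[p' [q' [q'_roots ->]]] E]].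
have q'x0 := q'_roots x phix.
have nz (s : {poly C}) : s.[x] != 0 -> s%:F != 0.
  by apply: contraNneq => /eqP; rewrite tofrac_eq0 => /eqP ->; rewrite horner0.
have cleared : (a * p - r * q) * q' = phi * p' * q.
  apply/eqP; rewrite -tofrac_eq !(tofracM, tofracB); apply/eqP.
  exact: clear_denominators (nz _ qx0) (nz _ q'x0) E.
have apx : a.[x] * p.[x] = r.[x] * q.[x].
  have := congr1 (horner^~ x) cleared; rewrite /= !(hornerM, hornerD, hornerN).
  rewrite (eqP phix) !mul0r => /eqP; rewrite mulf_eq0 (negPf q'x0) orbF.
  by rewrite subr_eq0 => /eqP.
by rewrite mulrA apx mulfK.
Qed.

Theorem corollary2 (R : realType) (n : nat) (phi : {poly R[i]}) (xs : seq R[i])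
    (hsize : size phi = n.+1)
    (hxs_size : size xs = n) (hxs_uniq : uniq xs)
    (hxs_roots : all (root phi) xs)
    (p q : {poly R[i]}) (hq : forall x, root phi x -> q.[x] != 0)
    (r : {poly R[i]}) (hr_deg : (size r <= n)%N)
    (hr_coset : in_phi_ideal phi ((phi^`())%:F * (p%:F / q%:F) - r%:F)) :
  \sum_(x <- xs) p.[x] / q.[x] = r`_n.-1 / lead_coef phi.
Proof.
subst n.
have phi_root x : x \in xs -> root phi x by move/(allP hxs_roots).
have lead_phi0 : lead_coef phi != 0 by rewrite lead_coef_eq0 -size_poly_eq0 hsize.
rewrite (coef_interpolation hsize hxs_uniq hxs_roots hr_deg) [RHS]mulrC mulKf //.
apply: eq_big_seq => x xs_x.
rewrite (in_phi_ideal_horner (phi_root x xs_x) _ hr_coset) ?hq ?phi_root //.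
by rewrite [RHS]mulrC mulKf ?(deriv_root_neq0 hsize).
Qed.
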